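(* Let $G=(V_G,E_G)$ be a finite directed acyclic graph. There is a one-to-one correspondence between Bayesian networks based on $G$ and CDU functors $\mathsf{Free}(G)\to\mathsf{Stoch}$. Explicitly, a Bayesian network $(\tau,\{P(A\mid \mathrm{Pa}(A))\}_{A\in V_G})$ corresponds to the CDU functor $\mathcal F$ with $\mathcal F(A)=\tau(A)$ on generating objects and sending the generator $a\colon B_1\otimes\cdots\otimes B_k\to A$ to the stochastic matrix with entries $\mathcal F(a)^{j}_{i_1\ldots i_k}=P(A=j\mid \mathrm{Pa}(A)=(i_1,\ldots,i_k))$; conversely a CDU functor $\mathcal F$ determines the Bayesian network with $\tau(A)=\mathcal F(A)$ and $P(A=j\mid\mathrm{Pa}(A)=(i_1,\ldots,i_k))=\mathcal F(a)^j_{i_1\ldots i_k}$, and these two assignments are mutually inverse.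
   Context: $\mathsf{Stoch}$ is the symmetric monoidal category whose objects are finite (nonempty) sets and whose morphisms $f\colon A\to B$ are $|B|\times|A|$ matrices of nonnegative reals with every column summing to $1$ (entries written $f_i^j$, $i\in A$, $j\in B$); composition is matrix multiplication, the monoidal product is cartesian product on objects and Kronecker product on matrices, $I=\{*\}$, and the symmetry is the swap matrix. A CDU category is a symmetric monoidal category in which every object $A$ carries a copy map $A\to A\otimes A$, a discard map $A\to I$ and a uniform state $I\to A$, such that copy is coassociative, cocommutative and counital with respect to discard, and discard composed with the uniform state is the identity on $I$; the structure on $I$ is trivial and that on $A\otimes B$ is built componentwise from those on $A$ and $B$. In $\mathsf{Stoch}$ these are: copy $(\Delta)_i^{jk}=\delta_i^j\delta_i^k$, discard $(\epsilon)_i=1$, uniform $(u)^i=1/|A|$. A CDU functor is a symmetric monoidal functor between CDU categories preserving copy maps, discard maps and uniform states. For a set $X$ of generating objects and a set $\Sigma$ of typed generating morphisms $f\colon u\to w$ ($u,w\in X^\star$), the free CDU category $\mathsf{FreeCDU}(X,\Sigma)$ has objects the words $X^\star$ and morphisms the string diagrams built from $\Sigma$ and copy/discard/uniform maps on each $x\in X$, modulo the CDU equations above. For a dag $G$, $\mathsf{Free}(G):=\mathsf{FreeCDU}(V_G,\Sigma_G)$ where $\Sigma_G$ contains, for each node $A$ with parents $B_1,\ldots,B_k$ (in a fixed order), one generator $a\colon B_1\otimes\cdots\otimes B_k\to A$. A Bayesian network based on $G$ consists of an assignment of a finite set $\tau(A)$ to each node $A\in V_G$ together with, for each $A$, a conditional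 probability distribution $P(A\mid\mathrm{Pa}(A))$ of values in $\tau(A)$ given values in $\tau(B_1)\times\cdots\times\tau(B_k)$ of the parents. *)

From HB Require Import structures.
From mathcomp Require Import all_boot all_order all_algebra.
From mathcomp Require Import reals.
Set Implicit Arguments. Unset Strict Implicit. Unset Printing Implicit Defensive.
Import Order.TTheory GRing.Theory Num.Theory.
Local Open Scope ring_scope.

(* Stoch, strictified: an object of a word w = [x1;..;xn] of generating     *)
(* objects, under an assignment tau of finite sets to generators, is the    *)
(* nested product tau x1 * (tau x2 * ( ... * unit)).  A morphism X -> Y is  *)
(* a function f : X -> Y -> R with f i j = f_i^j (column i, row j).         *)
Section Stoch.
Variable R : realType.
Variable V : Type.
Variable tau : V -> finType.

Fixpoint prodT (s : seq V) : finType :=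
  match s with
  | [::] => Finite.clone unit _
  | x :: s' => Finite.clone (tau x * prodT s')%type _
  end.

Fixpoint psplit (u v : seq V) : prodT (u ++ v) -> prodT u * prodT v :=
  match u return prodT (u ++ v) -> prodT u * prodT v with
  | [::] => fun x => (tt, x)
  | a :: u' => fun x => let p := @psplit u' v x.2 in ((x.1, p.1), p.2)
  end.

Definition stochastic (X Y : finType) (f : X -> Y -> R) : Prop :=
  (forall i j, 0 <= f i j) /\ (forall i, \sum_(j : Y) f i j = 1).

Definition sid (X : finType) : X -> X -> R := fun i j => (i == j)%:R.

Definition scomp (X Y Z : finType) (f : X -> Y -> R) (g : Y -> Z -> R)
  : X -> Z -> R := fun i k => \sum_(j : Y) f i j * g j k.

Definition stens (u1 w1 u2 w2 : seq V)
  (f : prodT u1 -> prodT w1 -> R) (g : prodT u2 -> prodT w2 -> R)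
  : prodT (u1 ++ u2) -> prodT (w1 ++ w2) -> R :=
  fun i j => f (psplit i).1 (psplit j).1 * g (psplit i).2 (psplit j).2.

Definition sswap (u w : seq V) : prodT (u ++ w) -> prodT (w ++ u) -> R :=
  fun i j => (((psplit i).1 == (psplit j).2) && ((psplit i).2 == (psplit j).1))%:R.

Definition scopy (x : V) : prodT [:: x] -> prodT [:: x; x] -> R :=
  fun i j => ((j.1 == i.1) && (j.2.1 == i.1))%:R.

Definition sdisc (x : V) : prodT [:: x] -> prodT [::] -> R := fun _ _ => 1.

Definition sunif (x : V) : prodT [::] -> prodT [:: x] -> R :=
  fun _ _ => (#|tau x|%:R)^-1.

End Stoch.

(* Free CDU category on generating objects V and one generator              *)
(*   a : pa A -> [:: A]   for each node A (pa A = parents in a fixed order). *)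
(* Morphisms u -> w: well-typed diagram terms modulo [eqv].                  *)
Section Free.
Variable V : finType.
Variable pa : V -> seq V.

Inductive tm : Type :=
| Gen of V
| Id of seq V
| Comp of tm & tm               (* Comp f g = g o f (diagrammatic order) *)
| Tens of tm & tm
| Swap of seq V & seq V
| Copy of V
| Disc of V
| Unif of V.

Fixpoint ty (t : tm) : option (seq V * seq V) :=
  match t with
  | Gen A => Some (pa A, [:: A])
  | Id w => Some (w, w)
  | Comp f g =>
      match ty f, ty g with
      | Some (u, v), Some (v', w) => if v == v' then Some (u, w) else None
      | _, _ => None
      end
  | Tens f g =>
      match ty f, ty g with
      | Some (u1, w1), Some (u2, w2) => Some (u1 ++ u2, w1 ++ w2)
      | _, _ => None
      end
  | Swap u w => Some (u ++ w, w ++ u)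
  | Copy x => Some ([:: x], [:: x; x])
  | Disc x => Some ([:: x], [::])
  | Unif x => Some ([::], [:: x])
  end.

Definition Hom (u w : seq V) := {t : tm | ty t == Some (u, w)}.

(* The congruence generated by the axioms of symmetric monoidal categories *)
(* and the CDU equations (for generating objects; the structure on words is *)
(* the componentwise one, hence derived).                                   *)
Inductive eqv : tm -> tm -> Prop :=
| eqv_refl t : eqv t t
| eqv_sym t t' : eqv t t' -> eqv t' t
| eqv_trans t1 t2 t3 : eqv t1 t2 -> eqv t2 t3 -> eqv t1 t3
| eqv_comp f f' g g' : eqv f f' -> eqv g g' -> eqv (Comp f g) (Comp f' g')
| eqv_tens f f' g g' : eqv f f' -> eqv g g' -> eqv (Tens f g) (Tens f' g')
| ax_idl f u w : ty f = Some (u, w) -> eqv (Comp (Id u) f) f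
| ax_idr f u w : ty f = Some (u, w) -> eqv (Comp f (Id w)) f
| ax_assoc f g h : eqv (Comp (Comp f g) h) (Comp f (Comp g h))
| ax_tassoc f g h : eqv (Tens (Tens f g) h) (Tens f (Tens g h))
| ax_tunitl f : eqv (Tens (Id [::]) f) f
| ax_tunitr f : eqv (Tens f (Id [::])) f
| ax_tid u w : eqv (Tens (Id u) (Id w)) (Id (u ++ w))
| ax_interchange f f' g g' u1 v1 w1 u2 v2 w2 :
    ty f = Some (u1, v1) -> ty f' = Some (v1, w1) ->
    ty g = Some (u2, v2) -> ty g' = Some (v2, w2) ->
    eqv (Comp (Tens f g) (Tens f' g')) (Tens (Comp f f') (Comp g g'))
| ax_swap_inv u w : eqv (Comp (Swap u w) (Swap w u)) (Id (u ++ w))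
| ax_swap_nat f g u1 w1 u2 w2 :
    ty f = Some (u1, w1) -> ty g = Some (u2, w2) ->
    eqv (Comp (Tens f g) (Swap w1 w2)) (Comp (Swap u1 u2) (Tens g f))
| ax_hexagon u v w :
    eqv (Swap u (v ++ w))
        (Comp (Tens (Swap u v) (Id w)) (Tens (Id v) (Swap u w)))
| ax_swap_unit u : eqv (Swap u [::]) (Id u)
| ax_coassoc x :
    eqv (Comp (Copy x) (Tens (Copy x) (Id [:: x])))
        (Comp (Copy x) (Tens (Id [:: x]) (Copy x)))
| ax_cocomm x : eqv (Comp (Copy x) (Swap [:: x] [:: x])) (Copy x)
| ax_counitl x : eqv (Comp (Copy x) (Tens (Disc x) (Id [:: x]))) (Id [:: x])
| ax_counitr x : eqv (Comp (Copy x) (Tens (Id [:: x]) (Disc x))) (Id [:: x])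
| ax_unif x : eqv (Comp (Unif x) (Disc x)) (Id [::]).

Lemma ty_comp (f g : tm) (u v w : seq V) :
  ty f == Some (u, v) -> ty g == Some (v, w) -> ty (Comp f g) == Some (u, w).
Proof. by move=> /eqP hf /eqP hg; rewrite /= hf hg eqxx. Qed.

Lemma ty_tens (f g : tm) (u1 w1 u2 w2 : seq V) :
  ty f == Some (u1, w1) -> ty g == Some (u2, w2) ->
  ty (Tens f g) == Some (u1 ++ u2, w1 ++ w2).
Proof. by move=> /eqP hf /eqP hg; rewrite /= hf hg. Qed.

Definition hgen (A : V) : Hom (pa A) [:: A] := exist _ (Gen A) (eqxx _).
Definition hid (w : seq V) : Hom w w := exist _ (Id w) (eqxx _).
Definition hcomp u v w (f : Hom u v) (g : Hom v w) : Hom u w :=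
  exist _ (Comp (sval f) (sval g)) (ty_comp (svalP f) (svalP g)).
Definition htens u1 w1 u2 w2 (f : Hom u1 w1) (g : Hom u2 w2)
  : Hom (u1 ++ u2) (w1 ++ w2) :=
  exist _ (Tens (sval f) (sval g)) (ty_tens (svalP f) (svalP g)).
Definition hswap (u w : seq V) : Hom (u ++ w) (w ++ u) :=
  exist _ (Swap u w) (eqxx _).
Definition hcopy (x : V) : Hom [:: x] [:: x; x] := exist _ (Copy x) (eqxx _).
Definition hdisc (x : V) : Hom [:: x] [::] := exist _ (Disc x) (eqxx _).
Definition hunif (x : V) : Hom [::] [:: x] := exist _ (Unif x) (eqxx _).

End Free.

Section Correspondence.
Variable R : realType.
Variable V : finType.
Variable pa : V -> seq V.

Record CDUFunctor := {
  F_ob : V -> finType;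
  F_ne : forall x, (0 < #|F_ob x|)%N;   (* objects of Stoch are nonempty *)
  F_mor : forall u w, Hom pa u w -> prodT F_ob u -> prodT F_ob w -> R;
  F_stoch : forall u w (f : Hom pa u w), stochastic (F_mor f);
  F_resp : forall u w (f g : Hom pa u w),
      eqv pa (sval f) (sval g) -> F_mor f = F_mor g;
  F_id : forall w, F_mor (hid pa w) = @sid R _;
  F_comp : forall u v w (f : Hom pa u v) (g : Hom pa v w),
      F_mor (hcomp f g) = scomp (F_mor f) (F_mor g);
  F_tens : forall u1 w1 u2 w2 (f : Hom pa u1 w1) (g : Hom pa u2 w2),
      F_mor (htens f g) = stens (F_mor f) (F_mor g);
  F_swap : forall u w, F_mor (hswap pa u w) = @sswap R _ F_ob u w;
  F_copy : forall x, F_mor (hcopy pa x) = @scopy R _ F_ob x;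
  F_disc : forall x, F_mor (hdisc pa x) = @sdisc R _ F_ob x;
  F_unif : forall x, F_mor (hunif pa x) = @sunif R _ F_ob x
}.

(* bn_cpt A i j = P(A = j | Pa(A) = i), i a tuple of values of the parents *)
Record BN := {
  bn_ty : V -> finType;
  bn_cpt : forall A, prodT bn_ty (pa A) -> bn_ty A -> R;
  bn_ge0 : forall A i j, 0 <= @bn_cpt A i j;
  bn_sum1 : forall A i, \sum_(j : bn_ty A) @bn_cpt A i j = 1
}.

Lemma sum_pair_unit (T : finType) (h : (T * unit)%type -> R) :
  \sum_(p : Finite.clone (T * unit)%type _) h p = \sum_(j : T) h (j, tt).
Proof.
change (\sum_(p : (T * unit)%type) h p = \sum_(j : T) h (j, tt)).
rewrite (eq_bigr (fun p => h (p.1, p.2))); last by case.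
rewrite -(pair_bigA _ (fun i (j:unit) => h (i, j))) /=.
by apply: eq_bigr => j _; rewrite (big_pred1 tt) //; case.
Qed.

Definition restrict (F : CDUFunctor) : BN.
refine (@Build_BN (F_ob F)
          (fun A i j => @F_mor F _ _ (hgen pa A) i (j, tt)) _ _).
- by move=> A i j; case: (@F_stoch F _ _ (hgen pa A)) => H _; apply: H.
- move=> A i; case: (@F_stoch F _ _ (hgen pa A)) => _ H.
  by rewrite -(H i) sum_pair_unit.
Defined.

End Correspondence.

From mathcomp Require Import all_boot ssralg ssrnum.
From mathcomp Require Import reals.
From Stdlib Require Import FunctionalExtensionality ProofIrrelevance Eqdep.
Set Implicit Arguments. Unset Strict Implicit. Unset Printing Implicit Defensive.
Import GRing.Theory Num.Theory.
Local Open Scope ring_scope.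

(* A Bayesian network extends to a CDU functor by sending a diagram to the
   stochastic matrix obtained by composing and tensoring its conditional
   probability tables; every equation of the free CDU category holds for these
   matrices, so the assignment respects [eqv].  Conversely, every morphism of
   Free(G) is built from generators and structure maps by composition and
   tensor, so a CDU functor is determined by its restriction to the generators.
   Acyclicity is needed only because the objects of Stoch are nonempty: by
   induction along G, once the parents of A can take some value, P(A | Pa(A))
   is a probability distribution on tau(A), which is therefore nonempty. *)

Section Encoding.
Variables (V : eqType) (tau : V -> finType).

Definition valseq := seq {x : V & tau x}.

Fixpoint enc (u : seq V) : prodT tau u -> valseq :=
  match u return prodT tau u -> valseq with
  | [::] => fun _ => [::]
  | x :: u' => fun i => Tagged tau i.1 :: enc i.2
  end.

Fixpoint pcat (u v : seq V) : prodT tau u -> prodT tau v -> prodT tau (u ++ v) :=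
  match u return prodT tau u -> prodT tau v -> prodT tau (u ++ v) with
  | [::] => fun _ j => j
  | x :: u' => fun i j => (i.1, pcat i.2 j)
  end.

Lemma size_enc u (i : prodT tau u) : size (enc i) = size u.
Proof. by elim: u i => //= x u IH [a i]; rewrite IH. Qed.

Lemma enc_inj u : injective (@enc u).
Proof.
elim: u => [|x u IH] /=; first by move=> [] [].
by move=> [a i] [b j] [/eqP]; rewrite eq_Tagged => /eqP /= -> /IH ->.
Qed.

Lemma enc_eq u (i j : prodT tau u) : (enc i == enc j) = (i == j).
Proof. exact: (inj_eq (@enc_inj u)). Qed.

Lemma eqseq_enc_cat u (i j : prodT tau u) (s t : valseq) :
  (enc i ++ s == enc j ++ t) = (i == j) && (s == t).
Proof. by rewrite eqseq_cat ?size_enc // enc_eq. Qed.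

Lemma enc_pcat u v (i : prodT tau u) (j : prodT tau v) :
  enc (pcat i j) = enc i ++ enc j.
Proof. by elim: u i => //= x u IH [a i]; rewrite IH. Qed.

Lemma enc_psplit u v (k : prodT tau (u ++ v)) :
  enc k = enc (psplit k).1 ++ enc (psplit k).2.
Proof. by elim: u k => //= x u IH [a k]; rewrite IH. Qed.

Lemma enc_catP u v (k : prodT tau (u ++ v)) :
  exists (i : prodT tau u) (j : prodT tau v), enc k = enc i ++ enc j.
Proof. by exists (psplit k).1, (psplit k).2; exact: enc_psplit. Qed.

Section Sums.
Variable R : nmodType.

Lemma big_prodT_nil (G : prodT tau [::] -> R) : \sum_(i : prodT tau [::]) G i = G tt.
Proof. by rewrite [LHS](big_pred1 tt) //; case. Qed.

Lemma big_prodT_cons x u (G : prodT tau (x :: u) -> R) :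
  \sum_(i : prodT tau (x :: u)) G i = \sum_(a : tau x) \sum_(i : prodT tau u) G (a, i).
Proof.
change (\sum_(k : (tau x * prodT tau u)%type) G k =
  \sum_(a : tau x) \sum_(i : prodT tau u) G (a, i)).
by rewrite pair_bigA; apply: eq_bigr => -[].
Qed.

Lemma big_prodT_cat u v (G : prodT tau (u ++ v) -> R) :
  \sum_(k : prodT tau (u ++ v)) G k =
  \sum_(i : prodT tau u) \sum_(j : prodT tau v) G (pcat i j).
Proof.
elim: u G => [|x u IH] G /=; first by rewrite big_prodT_nil.
by rewrite !big_prodT_cons; apply: eq_bigr => a _; rewrite IH.
Qed.

End Sums.
End Encoding.

Lemma sum_delta (R : pzSemiRingType) (T : finType) (i : T) (G : T -> R) :
  \sum_(k : T) (k == i)%:R * G k = G i.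
Proof.
rewrite (bigD1 i) //= eqxx mul1r big1 ?addr0 // => k /negbTE ->.
by rewrite mul0r.
Qed.

Lemma sum_enc_delta (R : pzSemiRingType) (V : eqType) (tau : V -> finType) u
    (i : prodT tau u) (G : prodT tau u -> R) :
  \sum_(k : prodT tau u) (enc k == enc i)%:R * G k = G i.
Proof. by under eq_bigr do rewrite enc_eq; exact: sum_delta. Qed.

Section Typing.
Variables (V : finType) (pa : V -> seq V).

Lemma ty_CompP f g u w : ty pa (Comp f g) = Some (u, w) ->
  exists v, ty pa f = Some (u, v) /\ ty pa g = Some (v, w).
Proof.
rewrite /=; case: (ty pa f) => [[a b]|] //; case: (ty pa g) => [[c d]|] //.
by case: eqP => // -> [<- <-]; exists c.
Qed.

Lemma ty_TensP f g u w : ty pa (Tens f g) = Some (u, w) ->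
  exists u1 w1 u2 w2, [/\ ty pa f = Some (u1, w1), ty pa g = Some (u2, w2),
     u = u1 ++ u2 & w = w1 ++ w2].
Proof.
rewrite /=; case: (ty pa f) => [[a b]|] //; case: (ty pa g) => [[c d]|] //.
by case=> <- <-; exists a, b, c, d.
Qed.

Lemma eqv_ty t t' : eqv pa t t' -> ty pa t = ty pa t'.
Proof.
elim=> {t t'} //=.
- by move=> t1 t2 t3 _ -> _ ->.
- by move=> f f' g g' _ -> _ ->.
- by move=> f f' g g' _ -> _ ->.
- by move=> f u w ->; rewrite eqxx.
- by move=> f u w ->; rewrite eqxx.
- move=> f g h; case: (ty pa f) => [[a b]|] //; case: (ty pa g) => [[c d]|] //=.
  case: (ty pa h) => [[e k]|] //=; last by case: (_ == _).
  case: (b =P c) => [?|/eqP/negbTE bc]; case: (d =P e) => [?|/eqP/negbTE de];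
    by subst; rewrite /= ?eqxx ?bc ?de.
- move=> f g h; case: (ty pa f) => [[a b]|] //; case: (ty pa g) => [[c d]|] //.
  by case: (ty pa h) => [[e k]|] //=; rewrite !catA.
- by move=> f; case: (ty pa f) => [[a b]|].
- by move=> f; case: (ty pa f) => [[a b]|] //=; rewrite !cats0.
- by move=> f f' g g' u1 v1 w1 u2 v2 w2 -> -> -> ->; rewrite !eqxx.
- by move=> u w; rewrite eqxx.
- by move=> f g u1 w1 u2 w2 -> ->; rewrite !eqxx.
- by move=> u v w; rewrite !catA eqxx.
- by move=> u; rewrite cats0.
all: by move=> x; rewrite eqxx.
Qed.

End Typing.

Section Interpretation.
Variables (R : numFieldType) (V : finType) (pa : V -> seq V) (tau : V -> finType).
Variable cpt : forall A, prodT tau (pa A) -> tau A -> R.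

Local Notation enc := (@enc _ tau _).

Definition dom (t : tm V) : seq V := if ty pa t is Some (u, _) then u else [::].
Definition cod (t : tm V) : seq V := if ty pa t is Some (_, w) then w else [::].

(* [interp t s s'] is the entry in column [s] and row [s'] of the matrix of [t].
   Tuples are encoded as lists of tagged values, so that [interp] needs no typing
   information; in the [Gen] case the sum over [i] decodes [s]. *)
Fixpoint interp (t : tm V) (s s' : valseq tau) : R :=
  match t with
  | Gen A => \sum_(i : prodT tau (pa A)) (enc i == s)%:R *
        \sum_(j : tau A) ([:: Tagged tau j] == s')%:R * cpt i j
  | Id _ => (s' == s)%:R
  | Comp f g => \sum_(k : prodT tau (cod f)) interp f s (enc k) * interp g (enc k) s'
  | Tens f g => interp f (take (size (dom f)) s) (take (size (cod f)) s') *
                interp g (drop (size (dom f)) s) (drop (size (cod f)) s')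
  | Swap u _ => (s' == drop (size u) s ++ take (size u) s)%:R
  | Copy _ => (s' == s ++ s)%:R
  | Disc _ => 1
  | Unif x => (#|tau x|%:R)^-1
  end.

Lemma interp_gen A (i : prodT tau (pa A)) (j : tau A) :
  interp (Gen A) (enc i) [:: Tagged tau j] = cpt i j.
Proof.
rewrite /=; under eq_bigr do rewrite enc_eq.
rewrite sum_delta -[RHS](sum_delta j (cpt i)).
by apply: eq_bigr => k _; rewrite eqseq_cons andbT eq_Tagged.
Qed.

Lemma interp_comp f u v : ty pa f = Some (u, v) -> forall g s s',
  interp (Comp f g) s s' = \sum_(k : prodT tau v) interp f s (enc k) * interp g (enc k) s'.
Proof. by rewrite /= /cod => ->. Qed.

Lemma interp_tens f u1 w1 : ty pa f = Some (u1, w1) -> forall g s1 s2 t1 t2,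
  size s1 = size u1 -> size t1 = size w1 ->
  interp (Tens f g) (s1 ++ s2) (t1 ++ t2) = interp f s1 t1 * interp g s2 t2.
Proof.
by rewrite /= /dom /cod => -> g s1 s2 t1 t2 <- <-; rewrite !take_size_cat ?drop_size_cat.
Qed.

Lemma interp_swap u w s1 s2 s' : size s1 = size u ->
  interp (Swap u w) (s1 ++ s2) s' = (s' == s2 ++ s1)%:R.
Proof. by move=> /= <-; rewrite take_size_cat ?drop_size_cat. Qed.

Hypothesis cpt_ge0 : forall A i j, 0 <= @cpt A i j.
Hypothesis cpt_sum1 : forall A i, \sum_(j : tau A) @cpt A i j = 1.
Hypothesis tau_gt0 : forall x, (0 < #|tau x|)%N.

Lemma interp_ge0 t s s' : 0 <= interp t s s'.
Proof.
elim: t s s'=> //= [A|f IHf g IHg|f IHf g IHg|x] s s'.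
- by do 2![apply: sumr_ge0 => ? _; apply: mulr_ge0 => //].
- by apply: sumr_ge0 => k _; apply: mulr_ge0.
- exact: mulr_ge0.
- by rewrite invr_ge0.
Qed.

Lemma sum_enc_delta1 u (i : prodT tau u) : \sum_(k : prodT tau u) (enc k == enc i)%:R = 1 :> R.
Proof.
by rewrite -[RHS](sum_enc_delta i (fun=> 1)); apply: eq_bigr => k _; rewrite mulr1.
Qed.

Lemma sum_unif x : \sum_(j : prodT tau [:: x]) (#|tau x|%:R)^-1 = 1 :> R.
Proof.
rewrite big_prodT_cons; under eq_bigr do rewrite big_prodT_nil.
rewrite sumr_const (eq_card (B := tau x)) // -[_ *+ _]mulr_natr.
by rewrite mulVf // pnatr_eq0 -lt0n.
Qed.

Lemma interp_sum1 t u w : ty pa t = Some (u, w) ->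
  forall i : prodT tau u, \sum_(j : prodT tau w) interp t (enc i) (enc j) = 1.
Proof.
elim: t u w => [A|w0|f IHf g IHg|f IHf g IHg|u0 w0|x|x|x] u w.
- case=> <- <- i; rewrite big_prodT_cons -(cpt_sum1 i).
  by apply: eq_bigr => a _; rewrite big_prodT_nil interp_gen.
- by case=> <- <- i; exact: sum_enc_delta1.
- move=> /ty_CompP [v [tf tg]] i; under eq_bigr do rewrite (interp_comp tf).
  rewrite exchange_big -[RHS](IHf _ _ tf i); apply: eq_bigr => k _.
  by rewrite -mulr_sumr IHg ?mulr1.
- move=> /ty_TensP [u1 [w1 [u2 [w2 [tf tg -> ->]]]]] i.
  have [i1 [i2 ->]] := enc_catP i.
  rewrite big_prodT_cat -[RHS](IHf _ _ tf i1); apply: eq_bigr => j1 _.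
  rewrite -[RHS]mulr1 -(IHg _ _ tg i2) mulr_sumr; apply: eq_bigr => j2 _.
  by rewrite enc_pcat (interp_tens tf) ?size_enc.
- case=> <- <- i; have [a [b ->]] := enc_catP i.
  rewrite -[RHS](sum_enc_delta1 (pcat b a)); apply: eq_bigr => j _.
  by rewrite (interp_swap _ _ _ (size_enc a)) enc_pcat.
- by case=> <- <- i; rewrite -[RHS](sum_enc_delta1 (pcat i i)) enc_pcat.
- by case=> <- <- i; rewrite big_prodT_nil.
- by case=> <- <- i; exact: sum_unif.
Qed.

Definition eq_interp (t t' : tm V) : Prop := forall u w, ty pa t = Some (u, w) ->
  forall (i : prodT tau u) (j : prodT tau w),
  interp t (enc i) (enc j) = interp t' (enc i) (enc j).

Lemma eq_interpP t t' u w : ty pa t = Some (u, w) ->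
  (forall (i : prodT tau u) (j : prodT tau w),
     interp t (enc i) (enc j) = interp t' (enc i) (enc j)) ->
  eq_interp t t'.
Proof. by move=> ht h u' w'; rewrite ht => -[<- <-]. Qed.

Lemma eq_interp_sym t t' : ty pa t = ty pa t' -> eq_interp t t' -> eq_interp t' t.
Proof. by move=> e h u w ht i j; rewrite h // e. Qed.

Lemma eq_interp_trans t1 t2 t3 : ty pa t1 = ty pa t2 ->
  eq_interp t1 t2 -> eq_interp t2 t3 -> eq_interp t1 t3.
Proof. by move=> e h12 h23 u w ht i j; rewrite h12 // h23 // -e. Qed.

Lemma eq_interp_comp f f' g g' : ty pa f = ty pa f' ->
  eq_interp f f' -> eq_interp g g' -> eq_interp (Comp f g) (Comp f' g').
Proof.
move=> e hf hg u w /ty_CompP [v [tf tg]] i j.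
rewrite (interp_comp tf) (interp_comp (etrans (esym e) tf)).
by apply: eq_bigr => k _; rewrite hf // hg.
Qed.

Lemma eq_interp_tens f f' g g' : ty pa f = ty pa f' ->
  eq_interp f f' -> eq_interp g g' -> eq_interp (Tens f g) (Tens f' g').
Proof.
move=> e hf hg u w /ty_TensP [u1 [w1 [u2 [w2 [tf tg -> ->]]]]] i j.
have [i1 [i2 ->]] := enc_catP i; have [j1 [j2 ->]] := enc_catP j.
rewrite (interp_tens tf) ?(interp_tens (etrans (esym e) tf)) ?size_enc //.
by rewrite hf // hg.
Qed.

Lemma eq_interp_idl f u w : ty pa f = Some (u, w) -> eq_interp (Comp (Id u) f) f.
Proof.
move=> tf; apply: (@eq_interpP _ _ u w) => [|i j]; first by rewrite /= tf eqxx.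
exact: (sum_enc_delta i (fun k => interp f (enc k) (enc j))).
Qed.

Lemma eq_interp_idr f u w : ty pa f = Some (u, w) -> eq_interp (Comp f (Id w)) f.
Proof.
move=> tf; apply: (@eq_interpP _ _ u w) => [|i j]; first by rewrite /= tf eqxx.
rewrite (interp_comp tf) -[RHS](sum_enc_delta j (fun k => interp f (enc i) (enc k))).
by apply: eq_bigr => k _; rewrite mulrC eq_sym.
Qed.

Lemma eq_interp_assoc f g h : eq_interp (Comp (Comp f g) h) (Comp f (Comp g h)).
Proof.
move=> u w /ty_CompP [v [/ty_CompP [v0 [tf tg]] th]] i j.
have tfg : ty pa (Comp f g) = Some (u, v) by rewrite /= tf tg eqxx.
rewrite (interp_comp tfg) (interp_comp tf).
under eq_bigr do rewrite (interp_comp tf) mulr_suml.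
rewrite exchange_big; apply: eq_bigr => k _.
by rewrite (interp_comp tg) mulr_sumr; apply: eq_bigr => l _; rewrite mulrA.
Qed.

Lemma eq_interp_tassoc f g h : eq_interp (Tens (Tens f g) h) (Tens f (Tens g h)).
Proof.
move=> _ _ /ty_TensP [u12 [w12 [u3 [w3 [tfg th -> ->]]]]].
have /ty_TensP [u1 [w1 [u2 [w2 [tf tg e1 e2]]]]] := tfg; subst u12 w12 => i j.
have [i12 [i3 ->]] := enc_catP i; have [i1 [i2 ->]] := enc_catP i12.
have [j12 [j3 ->]] := enc_catP j; have [j1 [j2 ->]] := enc_catP j12.
rewrite (interp_tens tfg) ?size_cat ?size_enc // (interp_tens tf) ?size_enc //.
by rewrite -!catA (interp_tens tf) ?size_enc // (interp_tens tg) ?size_enc // mulrA.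
Qed.

Lemma eq_interp_tunitl f : eq_interp (Tens (Id [::]) f) f.
Proof. by move=> u w _ i j; rewrite /= !take0 !drop0 mul1r. Qed.

Lemma eq_interp_tunitr f : eq_interp (Tens f (Id [::])) f.
Proof.
move=> u w /ty_TensP [u1 [w1 [_ [_ [tf [<- <-] -> ->]]]]] i j.
have [si sj] : size (enc i) = size u1 /\ size (enc j) = size w1.
  by rewrite !size_enc !cats0.
by rewrite -[in LHS](cats0 (enc i)) -[in LHS](cats0 (enc j)) (interp_tens tf) //= mulr1.
Qed.

Lemma eq_interp_tid u w : eq_interp (Tens (Id u) (Id w)) (Id (u ++ w)).
Proof.
move=> _ _ [<- <-] i j.
have [i1 [i2 ->]] := enc_catP i; have [j1 [j2 ->]] := enc_catP j.
rewrite (@interp_tens (Id u) u u) ?size_enc //=.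
by rewrite eqseq_enc_cat !enc_eq -natrM mulnb.
Qed.

Lemma eq_interp_interchange f f' g g' u1 v1 w1 u2 v2 w2 :
  ty pa f = Some (u1, v1) -> ty pa f' = Some (v1, w1) ->
  ty pa g = Some (u2, v2) -> ty pa g' = Some (v2, w2) ->
  eq_interp (Comp (Tens f g) (Tens f' g')) (Tens (Comp f f') (Comp g g')).
Proof.
move=> tf tf' tg tg'.
have tfg : ty pa (Tens f g) = Some (u1 ++ u2, v1 ++ v2) by rewrite /= tf tg.
have tff : ty pa (Comp f f') = Some (u1, w1) by rewrite /= tf tf' eqxx.
apply: (@eq_interpP _ _ (u1 ++ u2) (w1 ++ w2)) => [|i j].
  by rewrite /= tf tf' tg tg' eqxx.
have [i1 [i2 ->]] := enc_catP i; have [j1 [j2 ->]] := enc_catP j.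
rewrite (interp_comp tfg) big_prodT_cat (interp_tens tff) ?size_enc //.
rewrite (interp_comp tf) (interp_comp tg) mulr_suml; apply: eq_bigr => k1 _.
rewrite mulr_sumr; apply: eq_bigr => k2 _.
rewrite enc_pcat (interp_tens tf) ?size_enc // (interp_tens tf') ?size_enc //.
exact: mulrACA.
Qed.

Lemma eq_interp_swap_inv u w : eq_interp (Comp (Swap u w) (Swap w u)) (Id (u ++ w)).
Proof.
apply: (@eq_interpP _ _ (u ++ w) (u ++ w)) => [|i j]; first by rewrite /= eqxx.
have [a [b ->]] := enc_catP i.
rewrite (@interp_comp (Swap u w) _ _ erefl).
under eq_bigr do rewrite (interp_swap _ _ _ (size_enc a)) -enc_pcat.
by rewrite sum_enc_delta enc_pcat (interp_swap _ _ _ (size_enc b)).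
Qed.

Lemma interp_swap_enc u w (k : prodT tau (u ++ w)) (c : prodT tau w) (d : prodT tau u) :
  interp (Swap u w) (enc k) (enc c ++ enc d) = (enc k == enc (pcat d c))%:R.
Proof.
have [a [b ->]] := enc_catP k.
rewrite (interp_swap _ _ _ (size_enc a)) enc_pcat !eqseq_enc_cat !enc_eq.
by rewrite andbC (eq_sym c) (eq_sym d).
Qed.

Lemma eq_interp_swap_nat f g u1 w1 u2 w2 :
  ty pa f = Some (u1, w1) -> ty pa g = Some (u2, w2) ->
  eq_interp (Comp (Tens f g) (Swap w1 w2)) (Comp (Swap u1 u2) (Tens g f)).
Proof.
move=> tf tg; have tfg : ty pa (Tens f g) = Some (u1 ++ u2, w1 ++ w2) by rewrite /= tf tg.
apply: (@eq_interpP _ _ (u1 ++ u2) (w2 ++ w1)) => [|i j]; first by rewrite /= tf tg eqxx.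
have [a [b ->]] := enc_catP i; have [c [d ->]] := enc_catP j.
rewrite (interp_comp tfg) (@interp_comp (Swap u1 u2) _ _ erefl).
under eq_bigr do rewrite interp_swap_enc mulrC.
under [RHS]eq_bigr do rewrite (interp_swap _ _ _ (size_enc a)) -enc_pcat.
rewrite !sum_enc_delta !enc_pcat (interp_tens tf) ?size_enc // (interp_tens tg) ?size_enc //.
exact: mulrC.
Qed.

Lemma eq_interp_hexagon u v w :
  eq_interp (Swap u (v ++ w)) (Comp (Tens (Swap u v) (Id w)) (Tens (Id v) (Swap u w))).
Proof.
move=> _ _ [<- <-] i j.
have [a [bc ->]] := enc_catP i; have [b [c ->]] := enc_catP bc.
have [de [f ->]] := enc_catP j; have [d [e ->]] := enc_catP de.
have swap_ab (k : prodT tau ((v ++ u) ++ w)) :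
    interp (Tens (Swap u v) (Id w)) ((enc a ++ enc b) ++ enc c) (enc k) =
    (enc k == enc (pcat (pcat b a) c))%:R.
  have [k1 [k2 ->]] := enc_catP k.
  rewrite (@interp_tens (Swap u v) _ _ erefl) ?size_cat ?size_enc ?size_cat //.
  rewrite (interp_swap _ _ _ (size_enc a)) /= !enc_pcat.
  rewrite eqseq_cat; last by rewrite !size_cat !size_enc size_cat.
  by rewrite -natrM mulnb.
rewrite (interp_swap _ _ _ (size_enc a)) catA.
rewrite (@interp_comp (Tens (Swap u v) (Id w)) _ _ erefl).
under eq_bigr do rewrite swap_ab.
rewrite sum_enc_delta !enc_pcat -!catA (@interp_tens (Id v) v v) ?size_enc //.
by rewrite (interp_swap _ _ _ (size_enc a)) /= eqseq_enc_cat enc_eq -natrM mulnb.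
Qed.

Lemma eq_interp_swap_unit u : eq_interp (Swap u [::]) (Id u).
Proof.
move=> _ _ [<- <-] i j; have si : size (enc i) = size u by rewrite size_enc cats0.
by rewrite /= -si drop_size take_size.
Qed.

Lemma interp_copy x (i : prodT tau [:: x]) s' :
  interp (Copy x) (enc i) s' = (s' == enc (pcat i i))%:R.
Proof. by rewrite enc_pcat. Qed.

Lemma eq_interp_coassoc x : eq_interp (Comp (Copy x) (Tens (Copy x) (Id [:: x])))
                                      (Comp (Copy x) (Tens (Id [:: x]) (Copy x))).
Proof.
apply: (@eq_interpP _ _ [:: x] [:: x; x; x]) => [|i j]; first by rewrite /= eqxx.
rewrite !(@interp_comp (Copy x) _ _ erefl).
under eq_bigr do rewrite interp_copy.
under [RHS]eq_bigr do rewrite interp_copy.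
case: i j => [a []] [b [c [d []]]]; rewrite !sum_enc_delta /=.
by rewrite !eqseq_cons !andbT -!natrM !mulnb andbA.
Qed.

Lemma eq_interp_cocomm x : eq_interp (Comp (Copy x) (Swap [:: x] [:: x])) (Copy x).
Proof.
apply: (@eq_interpP _ _ [:: x] [:: x; x]) => [|i j]; first by rewrite /= eqxx.
rewrite (@interp_comp (Copy x) _ _ erefl).
under eq_bigr do rewrite interp_copy.
by case: i => a []; rewrite sum_enc_delta.
Qed.

Lemma eq_interp_counitl x : eq_interp (Comp (Copy x) (Tens (Disc x) (Id [:: x]))) (Id [:: x]).
Proof.
apply: (@eq_interpP _ _ [:: x] [:: x]) => [|i j]; first by rewrite /= eqxx.
rewrite (@interp_comp (Copy x) _ _ erefl).
under eq_bigr do rewrite interp_copy.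
by case: i j => [a []] [b []]; rewrite sum_enc_delta /= mul1r.
Qed.

Lemma eq_interp_counitr x : eq_interp (Comp (Copy x) (Tens (Id [:: x]) (Disc x))) (Id [:: x]).
Proof.
apply: (@eq_interpP _ _ [:: x] [:: x]) => [|i j]; first by rewrite /= eqxx.
rewrite (@interp_comp (Copy x) _ _ erefl).
under eq_bigr do rewrite interp_copy.
by case: i j => [a []] [b []]; rewrite sum_enc_delta /= mulr1.
Qed.

Lemma eq_interp_unif x : eq_interp (Comp (Unif x) (Disc x)) (Id [::]).
Proof.
apply: (@eq_interpP _ _ [::] [::]) => [|[] []]; first by rewrite /= eqxx.
by rewrite /=; under eq_bigr do rewrite mulr1; exact: sum_unif.
Qed.

Lemma eqv_interp t t' : eqv pa t t' -> eq_interp t t'.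
Proof.
elim=> {t t'}.
- by move=> t u w _ i j.
- by move=> t t' /eqv_ty; exact: eq_interp_sym.
- by move=> t1 t2 t3 /eqv_ty e h12 _; exact: eq_interp_trans.
- by move=> f f' g g' /eqv_ty e hf _; exact: eq_interp_comp.
- by move=> f f' g g' /eqv_ty e hf _; exact: eq_interp_tens.
- exact: eq_interp_idl.
- exact: eq_interp_idr.
- exact: eq_interp_assoc.
- exact: eq_interp_tassoc.
- exact: eq_interp_tunitl.
- exact: eq_interp_tunitr.
- exact: eq_interp_tid.
- exact: eq_interp_interchange.
- exact: eq_interp_swap_inv.
- exact: eq_interp_swap_nat.
- exact: eq_interp_hexagon.
- exact: eq_interp_swap_unit.
- exact: eq_interp_coassoc.
- exact: eq_interp_cocomm.
- exact: eq_interp_counitl.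
- exact: eq_interp_counitr.
- exact: eq_interp_unif.
Qed.

End Interpretation.

Section Extension.
Variables (R : realType) (V : finType) (pa : V -> seq V) (tau : V -> finType).
Variable cpt : forall A, prodT tau (pa A) -> tau A -> R.
Hypothesis cpt_ge0 : forall A i j, 0 <= @cpt A i j.
Hypothesis cpt_sum1 : forall A i, \sum_(j : tau A) @cpt A i j = 1.
Hypothesis tau_gt0 : forall x, (0 < #|tau x|)%N.

Local Notation enc := (@enc _ tau _).

Definition mor u w (f : Hom pa u w) (i : prodT tau u) (j : prodT tau w) : R :=
  interp cpt (sval f) (enc i) (enc j).

Lemma mor_stochastic u w (f : Hom pa u w) : stochastic (mor f).
Proof.
split=> [i j|i]; first exact: interp_ge0.
exact: interp_sum1 (eqP (svalP f)) i.
Qed.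

Lemma mor_eqv u w (f g : Hom pa u w) : eqv pa (sval f) (sval g) -> mor f = mor g.
Proof.
move=> e; do 2![apply: functional_extensionality => ?].
exact: eqv_interp e _ _ (eqP (svalP f)) _ _.
Qed.

Lemma mor_id w : mor (hid pa w) = @sid R _.
Proof.
by do 2![apply: functional_extensionality => ?]; rewrite /mor /sid /= enc_eq eq_sym.
Qed.

Lemma mor_comp u v w (f : Hom pa u v) (g : Hom pa v w) :
  mor (hcomp f g) = scomp (mor f) (mor g).
Proof.
do 2![apply: functional_extensionality => ?].
by rewrite /mor /scomp (interp_comp cpt (eqP (svalP f))).
Qed.

Lemma mor_tens u1 w1 u2 w2 (f : Hom pa u1 w1) (g : Hom pa u2 w2) :
  mor (htens f g) = stens (mor f) (mor g).
Proof.
apply: functional_extensionality => i; apply: functional_extensionality => j.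
rewrite /mor /stens (enc_psplit i) (enc_psplit j).
by rewrite (interp_tens cpt (eqP (svalP f))) ?size_enc.
Qed.

Lemma mor_swap u w : mor (hswap pa u w) = @sswap R _ tau u w.
Proof.
apply: functional_extensionality => i; apply: functional_extensionality => j.
rewrite /mor /sswap (enc_psplit i) (enc_psplit j) (interp_swap cpt _ _ _ (size_enc _)).
by rewrite eqseq_enc_cat enc_eq andbC (eq_sym (psplit j).1) (eq_sym (psplit j).2).
Qed.

Lemma mor_copy x : mor (hcopy pa x) = @scopy R _ tau x.
Proof.
apply: functional_extensionality => -[a []]; apply: functional_extensionality => -[b [c []]].
by rewrite /mor /scopy /= !eqseq_cons !eq_Tagged andbT.
Qed.

Lemma mor_disc x : mor (hdisc pa x) = @sdisc R _ tau x.
Proof. by []. Qed.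

Lemma mor_unif x : mor (hunif pa x) = @sunif R _ tau x.
Proof. by []. Qed.

End Extension.

Section FreeInduction.
Variables (V : finType) (pa : V -> seq V).
Variable P : forall u w, Hom pa u w -> Prop.
Hypothesis P_gen : forall A, P (hgen pa A).
Hypothesis P_id : forall w, P (hid pa w).
Hypothesis P_comp : forall u v w (f : Hom pa u v) (g : Hom pa v w),
  P f -> P g -> P (hcomp f g).
Hypothesis P_tens : forall u1 w1 u2 w2 (f : Hom pa u1 w1) (g : Hom pa u2 w2),
  P f -> P g -> P (htens f g).
Hypothesis P_swap : forall u w, P (hswap pa u w).
Hypothesis P_copy : forall x, P (hcopy pa x).
Hypothesis P_disc : forall x, P (hdisc pa x).
Hypothesis P_unif : forall x, P (hunif pa x).

Lemma Hom_transfer u w (f g : Hom pa u w) : P f -> sval f = sval g -> P g.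
Proof. by move=> Pf /val_inj <-. Qed.

Lemma Hom_leaf u0 w0 (h : Hom pa u0 w0) : P h ->
  forall u w (p : ty pa (sval h) == Some (u, w)), P (exist _ (sval h) p).
Proof.
move=> Ph u w p; case: (etrans (esym (eqP (svalP h))) (eqP p)) => eu ew; subst u w.
exact: Hom_transfer Ph _.
Qed.

Lemma Hom_ind u w (f : Hom pa u w) : P f.
Proof.
case: f => t; elim: t u w => [A|w0|f IHf g IHg|f IHf g IHg|u0 w0|x|x|x] u w p.
- exact: Hom_leaf (P_gen A) _ _ p.
- exact: Hom_leaf (P_id w0) _ _ p.
- have [v [/eqP tf /eqP tg]] := ty_CompP (eqP p).
  exact: Hom_transfer (P_comp (IHf _ _ tf) (IHg _ _ tg)) _.
- have [u1 [w1 [u2 [w2 [/eqP tf /eqP tg eu ew]]]]] := ty_TensP (eqP p); subst u w.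
  exact: Hom_transfer (P_tens (IHf _ _ tf) (IHg _ _ tg)) _.
- exact: Hom_leaf (P_swap u0 w0) _ _ p.
- exact: Hom_leaf (P_copy x) _ _ p.
- exact: Hom_leaf (P_disc x) _ _ p.
- exact: Hom_leaf (P_unif x) _ _ p.
Qed.

End FreeInduction.

Section Correspondence.
Variables (R : realType) (V : finType) (pa : V -> seq V).

Definition extend (b : BN R pa) (tau_gt0 : forall x, (0 < #|bn_ty b x|)%N) : CDUFunctor R pa :=
  Build_CDUFunctor tau_gt0 (mor_stochastic (@bn_ge0 _ _ _ b) (@bn_sum1 _ _ _ b) tau_gt0)
    (mor_eqv _ tau_gt0) (@mor_id _ _ _ _ _) (@mor_comp _ _ _ _ _) (@mor_tens _ _ _ _ _)
    (@mor_swap _ _ _ _ _) (@mor_copy _ _ _ _ _) (@mor_disc _ _ _ _ _) (@mor_unif _ _ _ _ _).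

Lemma BN_cpt_ext (tau : V -> finType) (c c' : forall A, prodT tau (pa A) -> tau A -> R)
    ge ge' sum sum' :
  c = c' -> @Build_BN R V pa tau c ge sum = @Build_BN R V pa tau c' ge' sum'.
Proof. by move=> e; subst c'; congr Build_BN; exact: proof_irrelevance. Qed.

Lemma restrict_extend (b : BN R pa) (tau_gt0 : forall x, (0 < #|bn_ty b x|)%N) :
  restrict (extend tau_gt0) = b.
Proof.
case: b tau_gt0 => tau cpt ge sum tau_gt0; apply: BN_cpt_ext.
do 3![apply: functional_extensionality_dep => ?]; exact: interp_gen.
Qed.

Lemma F_mor_restrictE (F : CDUFunctor R pa) u w (f : Hom pa u w) :
  @F_mor _ _ _ F _ _ f = mor (@bn_cpt _ _ _ (restrict F)) f.
Proof.
elim/Hom_ind: u w / f.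
- move=> A; apply: functional_extensionality => i; apply: functional_extensionality => -[j []].
  by rewrite /mor interp_gen.
- by move=> w; rewrite F_id mor_id.
- by move=> u v w f g IHf IHg; rewrite F_comp mor_comp IHf IHg.
- by move=> u1 w1 u2 w2 f g IHf IHg; rewrite F_tens mor_tens IHf IHg.
- by move=> u w; rewrite F_swap mor_swap.
- by move=> x; rewrite F_copy mor_copy.
- by move=> x; rewrite F_disc mor_disc.
- by move=> x; rewrite F_unif mor_unif.
Qed.

Lemma restrict_inj : injective (@restrict R V pa).
Proof.
move=> F G eFG; have eF := F_mor_restrictE F; have eG := F_mor_restrictE G.
case: F eFG eF => ob ne m st rs fid fc ft fs fcp fd fu.
case: G eG => ob' ne' m' st' rs' fid' fc' ft' fs' fcp' fd' fu' /= eG [eob].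
subst ob' => ecpt' eF; have ecpt := EqdepTheory.inj_pair2 _ _ _ _ _ ecpt'.
have em : m = m'.
  by do 3![apply: functional_extensionality_dep => ?]; rewrite eF eG ecpt.
by subst m'; f_equal; apply: proof_irrelevance.
Qed.

End Correspondence.

Lemma acyclic_ind (V : finType) (E : rel V) :
  (forall x y, E x y -> ~~ connect E y x) ->
  forall P : V -> Prop, (forall x, (forall y, E y x -> P y) -> P x) -> forall x, P x.
Proof.
move=> acyclic P IH x; have [n] := ubnP #|[set y | connect E y x]|.
elim: n x => // n IHn x; rewrite ltnS => hn; apply: IH => y Eyx; apply: IHn.
apply: leq_trans hn; apply: proper_card; apply/properP; split.
  by apply/subsetP => z; rewrite !inE => /connect_trans; apply; exact: connect1.
by exists x; rewrite !inE ?connect0 // acyclic.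
Qed.

Lemma card_prodT (V : Type) (tau : V -> finType) u :
  #|prodT tau u| = \prod_(x <- u) #|tau x|.
Proof.
elim: u => [|x u IH]; first by rewrite big_nil card_unit.
by rewrite big_cons -IH; exact: card_prod.
Qed.

Lemma card_gt0_of_sum1 (R : nzSemiRingType) (T : finType) (f : T -> R) :
  \sum_(j : T) f j = 1 -> (0 < #|T|)%N.
Proof.
move=> h; rewrite lt0n; apply/eqP => /card0_eq T0; move: h.
by rewrite big_pred0 => [/eqP|j]; [rewrite eq_sym oner_eq0 | exact: T0].
Qed.

Lemma bn_ty_gt0 (R : realType) (V : finType) (E : rel V) (pa : V -> seq V) :
  (forall x y, E x y -> ~~ connect E y x) -> (forall A y, y \in pa A -> E y A) ->
  forall (b : BN R pa) x, (0 < #|bn_ty b x|)%N.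
Proof.
move=> acyclic pa_edge b; elim/(acyclic_ind acyclic) => A IH.
have : (0 < #|prodT (bn_ty b) (pa A)|)%N.
  by rewrite card_prodT big_seq; apply: prodn_cond_gt0 => y /pa_edge /IH.
by case/card_gt0P => i _; exact: card_gt0_of_sum1 (bn_sum1 i).
Qed.

Theorem proposition2 (R : realType) (V : finType) (E : rel V)
    (pa : V -> seq V)
    (acyclic : forall x y : V, E x y -> ~~ connect E y x)
    (parents : forall A : V, perm_eq (pa A) [seq B <- enum V | E B A]) :
  bijective (@restrict R V pa).
Proof.
have pa_edge A y : y \in pa A -> E y A.
  by rewrite (perm_mem (parents A)) mem_filter => /andP[].
have tau_gt0 := bn_ty_gt0 (R := R) acyclic pa_edge.
exists (fun b => extend (tau_gt0 b)) => [F|b]; last exact: restrict_extend.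
by apply: restrict_inj; rewrite restrict_extend.
Qed.
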